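(* HazardPointersPOP, as described in the context, is robust: the number of retired but not yet freed nodes is bounded, regardless of delayed or stalled threads.
   Context: Setting: an asynchronous shared-memory system with a fixed number $N$ of threads operating on a linked concurrent data structure; each unlinked node is retired by exactly one thread. HazardPointersPOP: each thread has at most $H$ local reservation slots, a row of a shared reservation array, a shared counter publishCounter and a private retire list. Reading a node stores its pointer into a local slot (validated by re-reading the source pointer) without publishing; local slots are cleared at the end of each operation. When a thread's retire list reaches a threshold $r$ it records all publishCounters, sends a POSIX signal to every other thread (whose handler copies its local reservations into its shared slots and increments its publishCounter), waits until all other publishCounters have increased, then frees every node in its retire list that is not among the published reservations. Assumption: after being signalled, a thread publishes its reservations within bounded time. *)

From mathcomp Require Import all_boot all_order.

Set Implicit Arguments.
Unset Strict Implicit.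
Unset Printing Implicit Defensive.

(* Nodes are identified by natural numbers (an unbounded supply).
   Threads are 'I_N, reservation slots of a thread are 'I_H. *)

Definition upd {I : eqType} {T : Type} (f : I -> T) (i : I) (v : T) : I -> T :=
  fun j => if j == i then v else f j.

(* Control state of a thread w.r.t. reclamation:
   - Running: executing data-structure operations;
   - Waiting snap: inside a reclamation, having recorded the publishCounters
     [snap] and signalled every other thread, waiting for all other
     publishCounters to increase. *)
Inductive phase (N : nat) :=
| Running
| Waiting of ('I_N -> nat).
Arguments Waiting {N}.

Record state (N H : nat) := mkState {
  local      : 'I_N -> 'I_H -> option nat;  (* private (unpublished) reservations *)
  shared     : 'I_N -> 'I_H -> option nat;
  pubCounter : 'I_N -> nat;
  pending    : 'I_N -> bool;                (* signal delivered but not yet handled *)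
  phase_of   : 'I_N -> phase N;
  rlist      : 'I_N -> seq nat;
  retired    : seq nat;                     (* all nodes retired so far *)
  freed      : seq nat                      (* all nodes freed so far *)
}.

Definition init_state (N H : nat) : state N H :=
  @mkState N H (fun _ _ => None) (fun _ _ => None) (fun _ => 0%N)
    (fun _ => false) (fun _ => Running N) (fun _ => [::]) [::] [::].

Inductive label (N H : nat) :=
| Protect of 'I_N & 'I_H & nat  (* read a node: store it in a local slot (validated read) *)
| ClearLocal of 'I_N            (* end of an operation: clear all local slots *)
| Retire of 'I_N & nat          (* retire an unlinked node (each node retired once) *)
| Handler of 'I_N               (* signal handler runs in the given thread *)
| Finish of 'I_N.               (* end of the wait: free unreserved nodes *)
Arguments Protect {N H}.
Arguments ClearLocal {N H}.
Arguments Retire {N H}.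
Arguments Handler {N H}.
Arguments Finish {N H}.

Definition published N H (s : state N H) (n : nat) : bool :=
  [exists j : 'I_N, [exists k : 'I_H, shared s j k == Some n]].

(* One transition of the system, with retire threshold r. *)
Definition step (N H r : nat) (s : state N H) (l : label N H) (s' : state N H)
  : Prop :=
  match l with
  | Protect i k n =>
      phase_of s i = Running N /\
      s' = mkState (upd (local s) i (upd (local s i) k (Some n)))
             (shared s) (pubCounter s) (pending s) (phase_of s)
             (rlist s) (retired s) (freed s)
  | ClearLocal i =>
      phase_of s i = Running N /\
      s' = mkState (upd (local s) i (fun _ => None))
             (shared s) (pubCounter s) (pending s) (phase_of s)
             (rlist s) (retired s) (freed s)
  | Retire i n =>
      phase_of s i = Running N /\ n \notin retired s /\
      let l' := n :: rlist s i in
      if r <= size l' then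
        s' = mkState (local s) (shared s) (pubCounter s)
               (fun j => if j == i then pending s j else true)
               (upd (phase_of s) i (Waiting (pubCounter s)))
               (upd (rlist s) i l') (n :: retired s) (freed s)
      else
        s' = mkState (local s) (shared s) (pubCounter s) (pending s)
               (phase_of s) (upd (rlist s) i l') (n :: retired s) (freed s)
  | Handler j =>
      pending s j /\
      s' = mkState (local s) (upd (shared s) j (local s j))
             (upd (pubCounter s) j (pubCounter s j).+1)
             (upd (pending s) j false) (phase_of s)
             (rlist s) (retired s) (freed s)
  | Finish i =>
      exists snap : 'I_N -> nat,
      phase_of s i = Waiting snap /\
      (forall j : 'I_N, j != i -> snap j < pubCounter s j) /\
      s' = mkState (local s) (shared s) (pubCounter s) (pending s)
             (upd (phase_of s) i (Running N))
             (upd (rlist s) i [seq n <- rlist s i | published s n])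
             (retired s)
             (freed s ++ [seq n <- rlist s i | ~~ published s n])
  end.

Definition execution (N H r : nat) (ex : nat -> state N H)
    (lab : nat -> label N H) : Prop :=
  ex 0 = init_state N H /\ forall t, step r (ex t) (lab t) (ex t.+1).

Definition bounded_publication (N H D : nat) (ex : nat -> state N H)
    (lab : nat -> label N H) : Prop :=
  forall (t : nat) (j : 'I_N), pending (ex t) j ->
    exists2 d, d <= D & lab (t + d) = Handler j.

Definition unfreed N H (s : state N H) : nat :=
  size [seq n <- retired s | n \notin freed s].

From mathcomp Require Import all_boot zify.

Set Implicit Arguments.
Unset Strict Implicit.
Unset Printing Implicit Defensive.

(* Every retired, unfreed node sits in some retire list, and retire lists
   stay short: a list grows by one node per Retire while its owner is
   Running, its owner stops retiring (Waiting) once the threshold [r] is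
   reached, and a Finish keeps only published nodes, of which there are at
   most [N * H] (one per shared slot).  Hence each list has at most
   [r + N * H + 1] nodes and at most [N] times that many nodes are unfreed.
   The bound holds in every execution. *)

Section RetireListBound.

Variables N H r : nat.

Lemma size_filter_published (s : state N H) (l : seq nat) : uniq l ->
  size [seq n <- l | published s n] <= N * H.
Proof.
move=> uniq_l.
set slots := pmap (fun p : 'I_N * 'I_H => shared s p.1 p.2) (enum {: 'I_N * 'I_H}).
have -> : N * H = #|{: 'I_N * 'I_H}| by rewrite card_prod !card_ord.
apply: (@leq_trans (size slots)).
  apply: uniq_leq_size; first exact: filter_uniq.
  move=> n; rewrite mem_filter => /andP[/existsP[j /existsP[k /eqP jk_n]] _].
  by rewrite mem_pmap; apply/mapP; exists (j, k); rewrite ?mem_enum ?jk_n.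
by rewrite size_pmap cardE count_size.
Qed.

Let M := r + N * H.

Record hp_inv (s : state N H) : Prop := HPInv {
  uniq_retired : uniq (retired s);
  uniq_rlist : forall i, uniq (rlist s i);
  rlist_sub_retired : forall i, {subset rlist s i <= retired s};
  unfreed_in_rlist : forall n, n \in retired s -> n \notin freed s ->
    exists i, n \in rlist s i;
  size_rlist : forall i, size (rlist s i) <= M.+1;
  size_rlist_running : forall i, phase_of s i = Running N ->
    size (rlist s i) <= M
}.

Lemma hp_inv_init : hp_inv (init_state N H).
Proof. by split. Qed.

Lemma hp_inv_retire (s s' : state N H) (i : 'I_N) (n : nat) :
  hp_inv s -> phase_of s i = Running N -> n \notin retired s ->
  rlist s' = upd (rlist s) i (n :: rlist s i) ->
  retired s' = n :: retired s -> freed s' = freed s ->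
  (forall j, j != i -> phase_of s' j = phase_of s j) ->
  (phase_of s' i = Running N -> (size (rlist s i)).+1 < r) ->
  hp_inv s'.
Proof.
case=> uniq_ret uniq_rl sub_ret cover sz sz_run run_i fresh_n.
move=> rlist' retired' freed' phase_other phase_i.
have n_notin_rl : n \notin rlist s i by apply: contra fresh_n; apply: sub_ret.
split; rewrite ?rlist' ?retired' ?freed' /upd.
- by rewrite /= fresh_n.
- by move=> j; case: eqP => _ //=; rewrite n_notin_rl uniq_rl.
- move=> j m; case: eqP => _ m_in; rewrite inE.
    by case/predU1P: m_in => [->|/(sub_ret i) ->]; rewrite ?eqxx ?orbT.
  by rewrite (sub_ret j m m_in) orbT.
- move=> m /predU1P[-> _|m_ret m_unfreed]; first by exists i; rewrite eqxx mem_head.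
  have [j m_in] := cover m m_ret m_unfreed; exists j.
  by case: eqP => [ji|//]; rewrite inE -ji m_in orbT.
- by move=> j; case: eqP => _ /=; [have := sz_run i run_i | have := sz j].
- move=> j; case: (eqVneq j i) => [->|j_i]; first by move=> /phase_i /=; rewrite /M; lia.
  by rewrite phase_other //; apply: sz_run.
Qed.

Lemma hp_inv_finish (s s' : state N H) (i : 'I_N) :
  hp_inv s ->
  rlist s' = upd (rlist s) i [seq n <- rlist s i | published s n] ->
  retired s' = retired s ->
  freed s' = freed s ++ [seq n <- rlist s i | ~~ published s n] ->
  (forall j, j != i -> phase_of s' j = phase_of s j) ->
  hp_inv s'.
Proof.
case=> uniq_ret uniq_rl sub_ret cover sz sz_run.
move=> rlist' retired' freed' phase_other.
have sz_kept := size_filter_published s (uniq_rl i).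
split; rewrite ?rlist' ?retired' ?freed' /upd //.
- by move=> j; case: eqP => _ //; rewrite filter_uniq.
- move=> j m; case: eqP => _; last exact: sub_ret.
  by rewrite mem_filter => /andP[_ /sub_ret].
- move=> m m_ret; rewrite mem_cat negb_or => /andP[m_unfreed m_kept].
  have [j m_in] := cover m m_ret m_unfreed; exists j.
  case: eqP => [j_i|//]; subst j.
  by move: m_kept; rewrite !mem_filter m_in !andbT negbK.
- by move=> j; case: eqP => _ //; rewrite /M; lia.
- move=> j; case: (eqVneq j i) => [->|j_i]; first by rewrite /M; lia.
  by rewrite phase_other //; apply: sz_run.
Qed.

Lemma hp_inv_step (s s' : state N H) (l : label N H) :
  hp_inv s -> step r s l s' -> hp_inv s'.
Proof.
move=> inv_s; case: l => [i k n | i | i n | j | i] /=.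
- by case=> _ ->; case: inv_s.
- by case=> _ ->; case: inv_s.
- case=> run_i [fresh_n]; case: ifP => threshold -> ;
    apply: (hp_inv_retire inv_s run_i fresh_n) => //=.
  + by move=> j j_i; rewrite /upd (negbTE j_i).
  + by rewrite /upd eqxx.
  + by move=> _; move: threshold; rewrite /= ltnNge => ->.
- by case=> _ ->; case: inv_s.
- case=> snap [_ [_ ->]]; apply: (hp_inv_finish inv_s) => //= j j_i.
  by rewrite /upd (negbTE j_i).
Qed.

Lemma unfreed_le (s : state N H) : hp_inv s -> unfreed s <= N * M.+1.
Proof.
case=> uniq_ret _ _ cover sz _; rewrite /unfreed.
apply: (@leq_trans (size (flatten [seq rlist s i | i <- enum 'I_N]))).
  apply: uniq_leq_size => [|m]; first by rewrite filter_uniq.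
  rewrite mem_filter => /andP[m_unfreed m_ret].
  have [i m_in] := cover m m_ret m_unfreed.
  by apply/flatten_mapP; exists i; rewrite ?mem_enum.
rewrite size_flatten /shape -map_comp sumnE big_map big_enum /=.
by rewrite -[N in N * _]card_ord -sum_nat_const leq_sum.
Qed.

End RetireListBound.

Theorem mainTheorem8 :
  forall N H r : nat, exists B : nat,
    forall (D : nat) (ex : nat -> state N H) (lab : nat -> label N H),
      execution r ex lab ->
      bounded_publication D ex lab ->
      forall t : nat, unfreed (ex t) <= B.
Proof.
move=> N H r; exists (N * (r + N * H).+1) => D ex lab [ex0 ex_step] _ t.
apply: unfreed_le.
elim: t => [|t IHt]; first by rewrite ex0; apply: hp_inv_init.
exact: hp_inv_step IHt (ex_step t).
Qed.
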